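(* A marker-per-face strategy with point-plane data does not uniquely determine a scene consisting of several convex polyhedra: there exist two distinct finite sets $S\neq S'$ of pairwise disjoint convex polyhedra in $\mathbb{R}^3$ and a finite set $M$ of point-plane markers that is a marker-per-face markup of both $S$ and $S'$. Moreover, the same holds with point-normal markers in place of point-plane markers.
   Context: A polyhedron is a closed, connected, three-dimensional region of $\mathbb{R}^3$ whose boundary consists of finitely many polygons (faces) such that every edge of every face is shared with exactly one other face, two faces intersect only in shared edges or vertices, and faces sharing a vertex can be cyclically ordered so that consecutive ones share an edge; faces are taken maximal (closures of connected components of the locally planar part of the boundary). A point-plane marker is a pair $(p,R)$ with $R$ a plane and $p\in R$; a finite set $M$ of such markers is a marker-per-face markup of a finite set $S$ of polyhedra if each $(p,R)\in M$ has $p$ on some face $F$ of some polyhedron in $S$ with $R$ the plane of $F$, and every face $F$ of every polyhedron in $S$ contains the point of some marker whose plane is the plane of $F$. A point-normal marker is a pair $(p,n)$ with $n$ a unit vector; the markup condition is the same with ''the plane of $F$'' replaced by ''the outward unit normal on $F$''. *)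

From Stdlib Require Import Reals List.
Import ListNotations.
Open Scope R_scope.

Definition R3 : Type := (R * R * R)%type.
Definition region := R3 -> Prop.

Definition dot (u v : R3) : R :=
  let '(u1, u2, u3) := u in let '(v1, v2, v3) := v in u1*v1 + u2*v2 + u3*v3.
Definition vsub (u v : R3) : R3 :=
  let '(u1, u2, u3) := u in let '(v1, v2, v3) := v in (u1-v1, u2-v2, u3-v3).
Definition cross (u v : R3) : R3 :=
  let '(u1, u2, u3) := u in let '(v1, v2, v3) := v in
  (u2*v3 - u3*v2, u3*v1 - u1*v3, u1*v2 - u2*v1).
Definition vzero : R3 := (0, 0, 0).
Definition norm2 (u : R3) : R := dot u u.

Definition set_eq (A B : region) : Prop := forall x, A x <-> B x.

Definition is_plane (H : region) : Prop :=
  exists (n : R3) (c : R), n <> vzero /\ forall x, H x <-> dot n x = c.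

Definition ball (a : R3) (r : R) : region := fun x => norm2 (vsub x a) < r * r.

Definition convex_polyhedron (P : region) : Prop :=
  exists hs : list (R3 * R),
    (forall x, P x <-> forall h, In h hs -> dot (fst h) x <= snd h) /\
    (exists B, forall x, P x -> norm2 x <= B) /\
    (exists a r, 0 < r /\ forall x, ball a r x -> P x).

(* F is a (maximal, 2-dimensional) face of the convex polyhedron P *)
Definition is_face (P F : region) : Prop :=
  exists (n : R3) (c : R), n <> vzero /\
    (forall x, P x -> dot n x <= c) /\
    (forall x, F x <-> (P x /\ dot n x = c)) /\
    exists a b d, F a /\ F b /\ F d /\ cross (vsub b a) (vsub d a) <> vzero.

Definition plane_of_face (F H : region) : Prop :=
  is_plane H /\ forall x, F x -> H x.

Definition outward_unit_normal (P F : region) (n : R3) : Prop :=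
  norm2 n = 1 /\ exists c, (forall x, P x -> dot n x <= c) /\
                           (forall x, F x -> dot n x = c).

Definition pp_marker := (R3 * region)%type.
Definition pn_marker := (R3 * R3)%type.

Definition pp_markup (M : list pp_marker) (S : list region) : Prop :=
  (forall m, In m M -> exists P F, In P S /\ is_face P F /\ F (fst m) /\
                                   plane_of_face F (snd m)) /\
  (forall P F, In P S -> is_face P F ->
     exists m, In m M /\ F (fst m) /\ plane_of_face F (snd m)).

Definition pn_markup (M : list pn_marker) (S : list region) : Prop :=
  (forall m, In m M -> exists P F, In P S /\ is_face P F /\ F (fst m) /\
                                   outward_unit_normal P F (snd m)) /\
  (forall P F, In P S -> is_face P F ->
     exists m, In m M /\ F (fst m) /\ outward_unit_normal P F (snd m)).

Definition valid_scene (S : list region) : Prop :=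
  (forall P, In P S -> convex_polyhedron P) /\
  (forall i j, (i < length S)%nat -> (j < length S)%nat -> i <> j ->
     forall x, ~ (nth i S (fun _ => False) x /\ nth j S (fun _ => False) x)).

Definition mem_scene (P : region) (S : list region) : Prop :=
  exists Q, In Q S /\ set_eq P Q.

Definition scenes_differ (S S' : list region) : Prop :=
  (exists P, In P S /\ ~ mem_scene P S') \/ (exists P, In P S' /\ ~ mem_scene P S).

From Stdlib Require Import Reals List Lra Lia.
Import ListNotations.
Open Scope R_scope.

(* Both scenes consist of three pairwise disjoint axis-parallel boxes: scene1 is
   [0,1]x[0,1]x[0,3], [0,3]x[2,3]x[0,1], [2,3]x[0,3]x[2,3], and scene2 is its mirror
   image under (x,y,z) |-> (x,z,y).  All faces of both scenes lie in the planes
   x, y, z in {0,1,2,3}, and the faces of the two scenes overlap so much that 23 points,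
   each tagged with an axis and a side, sit on a face of both scenes with the right
   plane and outward normal, while every face of either scene carries one of them.
   Since the faces of a nondegenerate box are exactly its six facets, verifying this
   reduces to finitely many coordinate inequalities. *)

Definition coord (i : nat) (x : R3) : R :=
  let '(x1, x2, x3) := x in match i with O => x1 | S O => x2 | _ => x3 end.

Definition upd (i : nat) (x : R3) (v : R) : R3 :=
  let '(x1, x2, x3) := x in
  match i with O => (v, x2, x3) | S O => (x1, v, x3) | _ => (x1, x2, v) end.

Definition sgn (s : bool) : R := if s then 1 else -1.

Definition nvec (i : nat) (s : bool) : R3 :=
  match i with O => (sgn s, 0, 0) | S O => (0, sgn s, 0) | _ => (0, 0, sgn s) end.

Definition axis_plane (i : nat) (v : R) : region := fun x => coord i x = v.

Ltac axis_cases i := destruct i as [|[|[|i]]]; try lia.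

Lemma coord_upd_same i x v : (i < 3)%nat -> coord i (upd i x v) = v.
Proof. intros; destruct x as [[x1 x2] x3]; axis_cases i; reflexivity. Qed.

Lemma coord_upd_other i j x v : (i < 3)%nat -> (j < 3)%nat -> j <> i ->
  coord j (upd i x v) = coord j x.
Proof. intros; destruct x as [[x1 x2] x3]; axis_cases i; axis_cases j; reflexivity. Qed.

Lemma dot_upd i n x v : (i < 3)%nat ->
  dot n (upd i x v) = dot n x + coord i n * (v - coord i x).
Proof.
  intros; destruct x as [[x1 x2] x3], n as [[n1 n2] n3]; axis_cases i; simpl; ring.
Qed.

Lemma coord_vsub i u w : (i < 3)%nat -> coord i (vsub u w) = coord i u - coord i w.
Proof. intros; destruct u as [[u1 u2] u3], w as [[w1 w2] w3]; axis_cases i; reflexivity. Qed.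

Lemma dot_nvec i s x : (i < 3)%nat -> dot (nvec i s) x = sgn s * coord i x.
Proof. intros; destruct x as [[x1 x2] x3]; axis_cases i; simpl; ring. Qed.

Lemma norm2_nvec i s : (i < 3)%nat -> norm2 (nvec i s) = 1.
Proof. intros; unfold norm2; axis_cases i; destruct s; simpl; ring. Qed.

Lemma nvec_neq0 i s : (i < 3)%nat -> nvec i s <> vzero.
Proof.
  intros Hi E; pose proof (norm2_nvec i s Hi) as N; rewrite E in N.
  unfold norm2, vzero in N; simpl in N; lra.
Qed.

Lemma dot_axis n x i : (i < 3)%nat ->
  (forall j, (j < 3)%nat -> j <> i -> coord j n = 0) -> dot n x = coord i n * coord i x.
Proof.
  intros Hi H; destruct x as [[x1 x2] x3], n as [[n1 n2] n3].
  pose proof (H 0%nat) as H0; pose proof (H 1%nat) as H1; pose proof (H 2%nat) as H2.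
  axis_cases i; simpl in *.
  - rewrite H1, H2 by lia; ring.
  - rewrite H0, H2 by lia; ring.
  - rewrite H0, H1 by lia; ring.
Qed.

Lemma cross_eq0_of_two_coords i j u w : (i < 3)%nat -> (j < 3)%nat -> i <> j ->
  coord i u = 0 -> coord i w = 0 -> coord j u = 0 -> coord j w = 0 -> cross u w = vzero.
Proof.
  intros; destruct u as [[u1 u2] u3], w as [[w1 w2] w3].
  axis_cases i; axis_cases j; simpl in *; subst; unfold vzero; f_equal; try f_equal; ring.
Qed.

Definition box (lo hi : R3) : region :=
  fun x => forall i, (i < 3)%nat -> coord i lo <= coord i x <= coord i hi.

Definition nondegenerate (lo hi : R3) : Prop := forall i, (i < 3)%nat -> coord i lo < coord i hi.

Definition box_bound (lo hi : R3) (i : nat) (s : bool) : R := coord i (if s then hi else lo).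

Definition facet (lo hi : R3) (i : nat) (s : bool) : region :=
  fun x => box lo hi x /\ coord i x = box_bound lo hi i s.

Lemma box_upd lo hi x i v : (i < 3)%nat -> box lo hi x ->
  coord i lo <= v <= coord i hi -> box lo hi (upd i x v).
Proof.
  intros Hi Hb Hv j Hj. destruct (Nat.eq_dec j i) as [->|Hne].
  - rewrite coord_upd_same; auto.
  - rewrite coord_upd_other; auto.
Qed.

Lemma nvec_halfspace_iff lo hi i s x : (i < 3)%nat ->
  dot (nvec i s) x <= sgn s * box_bound lo hi i s <->
  (if s then coord i x <= coord i hi else coord i lo <= coord i x).
Proof. intros Hi; rewrite dot_nvec by exact Hi; unfold box_bound, sgn; destruct s; lra. Qed.

Lemma box_nvec_le lo hi i s x : (i < 3)%nat -> box lo hi x ->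
  dot (nvec i s) x <= sgn s * box_bound lo hi i s.
Proof. intros Hi Hb; apply nvec_halfspace_iff; auto; destruct s; apply Hb; exact Hi. Qed.

Lemma coord_lt_of_norm2_lt i v r : (i < 3)%nat -> 0 < r -> norm2 v < r * r ->
  - r < coord i v < r.
Proof.
  intros Hi Hr Hv; destruct v as [[v1 v2] v3]; unfold norm2 in Hv; simpl in Hv.
  pose proof (Rle_0_sqr v1); pose proof (Rle_0_sqr v2); pose proof (Rle_0_sqr v3).
  unfold Rsqr in *; axis_cases i; simpl; split; nra.
Qed.

Definition box_halfspaces (lo hi : R3) : list (R3 * R) :=
  map (fun '(i, s) => (nvec i s, sgn s * box_bound lo hi i s))
    [(0, false); (0, true); (1, false); (1, true); (2, false); (2, true)]%nat.

Lemma box_iff_halfspaces lo hi x :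
  box lo hi x <-> forall h, In h (box_halfspaces lo hi) -> dot (fst h) x <= snd h.
Proof.
  split.
  - intros Hb h Hin; apply in_map_iff in Hin as [[i s] [<- Hin]].
    apply box_nvec_le; auto.
    simpl in Hin; repeat (destruct Hin as [E|Hin]; [injection E; intros; lia|]); contradiction.
  - intros H k Hk; split;
      [apply (nvec_halfspace_iff lo hi k false) | apply (nvec_halfspace_iff lo hi k true)];
      auto; apply (H (_, _)), in_map_iff;
      [exists (k, false) | exists (k, true)]; split; [reflexivity| |reflexivity|];
      axis_cases k; simpl; auto 8.
Qed.

Lemma box_norm2_le lo hi x : box lo hi x -> norm2 x <= norm2 lo + norm2 hi.
Proof.
  intros Hb; pose proof (Hb 0%nat ltac:(lia)); pose proof (Hb 1%nat ltac:(lia));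
    pose proof (Hb 2%nat ltac:(lia)).
  destruct x as [[x1 x2] x3], lo as [[l1 l2] l3], hi as [[h1 h2] h3]; unfold norm2; simpl in *.
  assert (x1 * x1 <= l1 * l1 + h1 * h1) by (destruct (Rle_dec 0 x1); nra).
  assert (x2 * x2 <= l2 * l2 + h2 * h2) by (destruct (Rle_dec 0 x2); nra).
  assert (x3 * x3 <= l3 * l3 + h3 * h3) by (destruct (Rle_dec 0 x3); nra).
  lra.
Qed.

Lemma box_contains_ball lo hi : nondegenerate lo hi ->
  exists a r, 0 < r /\ forall x, ball a r x -> box lo hi x.
Proof.
  intros Hnd; pose proof (Hnd 0%nat ltac:(lia)); pose proof (Hnd 1%nat ltac:(lia));
    pose proof (Hnd 2%nat ltac:(lia)).
  destruct lo as [[l1 l2] l3], hi as [[h1 h2] h3]; simpl in *.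
  pose proof (Rmin_l (Rmin (h1 - l1) (h2 - l2)) (h3 - l3)).
  pose proof (Rmin_r (Rmin (h1 - l1) (h2 - l2)) (h3 - l3)).
  pose proof (Rmin_l (h1 - l1) (h2 - l2)); pose proof (Rmin_r (h1 - l1) (h2 - l2)).
  set (m := Rmin (Rmin (h1 - l1) (h2 - l2)) (h3 - l3)) in *.
  assert (m0 : 0 < m) by (apply Rmin_glb_lt; [apply Rmin_glb_lt|]; lra).
  set (r := m / 2); assert (r0 : 0 < r) by (unfold r; lra).
  exists ((l1 + h1) / 2, (l2 + h2) / 2, (l3 + h3) / 2), r; split; [exact r0|].
  intros x Hx k Hk; pose proof (coord_lt_of_norm2_lt k _ r Hk r0 Hx) as Hxk.
  rewrite coord_vsub in Hxk by exact Hk.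
  destruct x as [[x1 x2] x3]; unfold r in *; axis_cases k; simpl in *; lra.
Qed.

Lemma box_convex_polyhedron lo hi : nondegenerate lo hi -> convex_polyhedron (box lo hi).
Proof.
  intros Hnd; exists (box_halfspaces lo hi); split; [apply box_iff_halfspaces|].
  split; [exists (norm2 lo + norm2 hi); apply box_norm2_le | apply box_contains_ball, Hnd].
Qed.

Section FaceOfBox.
Variables (lo hi : R3) (F : region) (n : R3) (c : R).
Hypothesis Hnd : nondegenerate lo hi.
Hypothesis Hsup : forall x, box lo hi x -> dot n x <= c.
Hypothesis HF : forall x, F x <-> (box lo hi x /\ dot n x = c).

(* Otherwise moving [x] along axis [i] to [hi] would raise [dot n x] above [c]. *)
Lemma face_coord_hi i x : (i < 3)%nat -> F x -> 0 < coord i n -> coord i x = coord i hi.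
Proof.
  intros Hi Fx Hn; apply HF in Fx as [Bx Ex]; pose proof (Bx i Hi).
  assert (Bv : box lo hi (upd i x (coord i hi))).
  { apply box_upd; auto; pose proof (Hnd i Hi); lra. }
  pose proof (Hsup _ Bv) as Hv; rewrite dot_upd in Hv by exact Hi.
  destruct (Req_dec (coord i x) (coord i hi)) as [E|NE]; [exact E|].
  assert (0 < coord i n * (coord i hi - coord i x)) by (apply Rmult_lt_0_compat; lra).
  lra.
Qed.

Lemma face_coord_lo i x : (i < 3)%nat -> F x -> coord i n < 0 -> coord i x = coord i lo.
Proof.
  intros Hi Fx Hn; apply HF in Fx as [Bx Ex]; pose proof (Bx i Hi).
  assert (Bv : box lo hi (upd i x (coord i lo))).
  { apply box_upd; auto; pose proof (Hnd i Hi); lra. }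
  pose proof (Hsup _ Bv) as Hv; rewrite dot_upd in Hv by exact Hi.
  destruct (Req_dec (coord i x) (coord i lo)) as [E|NE]; [exact E|].
  assert (0 < - coord i n * (coord i x - coord i lo)) by (apply Rmult_lt_0_compat; lra).
  lra.
Qed.

Lemma face_coord_const i x y : (i < 3)%nat -> coord i n <> 0 -> F x -> F y ->
  coord i x = coord i y.
Proof.
  intros Hi Hn Fx Fy; destruct (Rtotal_order (coord i n) 0) as [H|[H|H]].
  - rewrite (face_coord_lo i x), (face_coord_lo i y); auto.
  - contradiction.
  - rewrite (face_coord_hi i x), (face_coord_hi i y); auto.
Qed.

Lemma face_flat_of_two_axes i j a b d : (i < 3)%nat -> (j < 3)%nat -> i <> j ->
  coord i n <> 0 -> coord j n <> 0 -> F a -> F b -> F d ->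
  cross (vsub b a) (vsub d a) = vzero.
Proof.
  intros Hi Hj Hij Hni Hnj Fa Fb Fd.
  apply (cross_eq0_of_two_coords i j); auto; rewrite coord_vsub by assumption;
    apply Rminus_diag_eq; eapply face_coord_const; eassumption.
Qed.

Lemma face_eq_facet_of_one_axis i a : (i < 3)%nat -> coord i n <> 0 ->
  (forall j, (j < 3)%nat -> j <> i -> coord j n = 0) -> F a ->
  exists s, forall x, F x <-> facet lo hi i s x.
Proof.
  intros Hi Hn Hz Fa.
  assert (Ha := Fa); apply HF in Ha as [_ Ea]; rewrite (dot_axis n a i Hi Hz) in Ea.
  destruct (Rtotal_order (coord i n) 0) as [H|[H|H]];
    [exists false | contradiction | exists true];
    intro x; unfold facet, box_bound; split.
  - intro Fx; split; [apply HF in Fx; tauto | apply face_coord_lo; auto].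
  - intros [Bx Ex]; apply HF; split; [exact Bx|].
    rewrite (dot_axis n x i Hi Hz), Ex, <- Ea, (face_coord_lo i a); auto.
  - intro Fx; split; [apply HF in Fx; tauto | apply face_coord_hi; auto].
  - intros [Bx Ex]; apply HF; split; [exact Bx|].
    rewrite (dot_axis n x i Hi Hz), Ex, <- Ea, (face_coord_hi i a); auto.
Qed.
End FaceOfBox.

(* A face contains three non-collinear points, so its normal cannot have two nonzero
   coordinates: each of them would pin the corresponding coordinate on the face. *)
Lemma box_face_eq_facet lo hi F : nondegenerate lo hi -> is_face (box lo hi) F ->
  exists i s, (i < 3)%nat /\ forall x, F x <-> facet lo hi i s x.
Proof.
  intros Hnd [n [c [Hn [Hsup [HF [a [b [d [Fa [Fb [Fd Hcr]]]]]]]]]]].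
  destruct (Req_dec (coord 0 n) 0) as [z0|z0];
  destruct (Req_dec (coord 1 n) 0) as [z1|z1];
  destruct (Req_dec (coord 2 n) 0) as [z2|z2];
  try (exfalso; apply Hcr; apply (face_flat_of_two_axes lo hi F n c Hnd Hsup HF 0 1); auto; lia);
  try (exfalso; apply Hcr; apply (face_flat_of_two_axes lo hi F n c Hnd Hsup HF 0 2); auto; lia);
  try (exfalso; apply Hcr; apply (face_flat_of_two_axes lo hi F n c Hnd Hsup HF 1 2); auto; lia).
  - exfalso; apply Hn; destruct n as [[n1 n2] n3]; simpl in *; subst; reflexivity.
  - destruct (face_eq_facet_of_one_axis lo hi F n c Hnd Hsup HF 2 a) as [s Hs]; auto.
    + intros j Hj Hji; axis_cases j; auto; lia.
    + exists 2%nat, s; auto.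
  - destruct (face_eq_facet_of_one_axis lo hi F n c Hnd Hsup HF 1 a) as [s Hs]; auto.
    + intros j Hj Hji; axis_cases j; auto; lia.
    + exists 1%nat, s; auto.
  - destruct (face_eq_facet_of_one_axis lo hi F n c Hnd Hsup HF 0 a) as [s Hs]; auto.
    + intros j Hj Hji; axis_cases j; auto; lia.
    + exists 0%nat, s; auto.
Qed.

Lemma facet_is_face lo hi i s : nondegenerate lo hi -> (i < 3)%nat ->
  is_face (box lo hi) (facet lo hi i s).
Proof.
  intros Hnd Hi; exists (nvec i s), (sgn s * box_bound lo hi i s).
  split; [|split; [|split]].
  - apply nvec_neq0; exact Hi.
  - intros; apply box_nvec_le; auto.
  - intro x; unfold facet; rewrite dot_nvec by exact Hi; unfold sgn; destruct s;
      split; intros [A B]; split; auto; lra.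
  - pose proof (Hnd 0%nat ltac:(lia)); pose proof (Hnd 1%nat ltac:(lia));
      pose proof (Hnd 2%nat ltac:(lia)).
    destruct lo as [[l1 l2] l3], hi as [[h1 h2] h3]; simpl in *.
    unfold facet, box, box_bound.
    axis_cases i; destruct s; simpl;
      [ exists (h1, l2, l3), (h1, h2, l3), (h1, l2, h3)
      | exists (l1, l2, l3), (l1, h2, l3), (l1, l2, h3)
      | exists (l1, h2, l3), (h1, h2, l3), (l1, h2, h3)
      | exists (l1, l2, l3), (h1, l2, l3), (l1, l2, h3)
      | exists (l1, l2, h3), (h1, l2, h3), (l1, h2, h3)
      | exists (l1, l2, l3), (h1, l2, l3), (l1, h2, l3) ];
      refine (conj (conj _ eq_refl) (conj (conj _ eq_refl) (conj (conj _ eq_refl) _)));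
      try (intros k Hk; axis_cases k; simpl; lra);
      unfold vzero; intro E; injection E; intros; nra.
Qed.

Lemma facet_outward_unit_normal lo hi F i s : (i < 3)%nat ->
  (forall x, F x <-> facet lo hi i s x) -> outward_unit_normal (box lo hi) F (nvec i s).
Proof.
  intros Hi HF; split; [apply norm2_nvec; exact Hi|].
  exists (sgn s * box_bound lo hi i s); split.
  - intros; apply box_nvec_le; auto.
  - intros x Fx; apply HF in Fx as [_ E]; rewrite dot_nvec, E by exact Hi; reflexivity.
Qed.

Lemma facet_axis_plane lo hi F i s p : (i < 3)%nat ->
  (forall x, F x <-> facet lo hi i s x) -> facet lo hi i s p ->
  plane_of_face F (axis_plane i (coord i p)).
Proof.
  intros Hi HF [_ Ep]; split.
  - exists (nvec i true), (coord i p); split; [apply nvec_neq0; exact Hi|].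
    intro x; unfold axis_plane; rewrite dot_nvec by exact Hi; unfold sgn; lra.
  - intros x Fx; apply HF in Fx as [_ E]; unfold axis_plane; rewrite E, Ep; reflexivity.
Qed.

Definition boxes (bs : list (R3 * R3)) : list region := map (fun b => box (fst b) (snd b)) bs.

Lemma face_of_boxes bs P F : Forall (fun b => nondegenerate (fst b) (snd b)) bs ->
  In P (boxes bs) -> is_face P F ->
  exists b i s, In b bs /\ (i < 3)%nat /\ P = box (fst b) (snd b) /\
                forall x, F x <-> facet (fst b) (snd b) i s x.
Proof.
  intros Hnd HP HF; apply in_map_iff in HP as [b [<- Hb]].
  rewrite Forall_forall in Hnd.
  destruct (box_face_eq_facet _ _ F (Hnd b Hb) HF) as [i [s [Hi HFi]]].
  exists b, i, s; auto.
Qed.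

(* [(p, i, s)] marks [p] on a facet orthogonal to axis [i], on the [hi] side iff [s]. *)
Definition facet_marker := (R3 * nat * bool)%type.

Definition pn_of_facet_marker (t : facet_marker) : pn_marker :=
  let '(p, i, s) := t in (p, nvec i s).

Definition pp_of_facet_marker (t : facet_marker) : pp_marker :=
  let '(p, i, s) := t in (p, axis_plane i (coord i p)).

Definition facet_markup (T : list facet_marker) (bs : list (R3 * R3)) : Prop :=
  Forall (fun '(p, i, s) => (i < 3)%nat /\ Exists (fun b => facet (fst b) (snd b) i s p) bs) T /\
  Forall (fun b => forall i s, (i < 3)%nat ->
            Exists (fun '(p, i', s') => i' = i /\ s' = s /\ facet (fst b) (snd b) i s p) T) bs.

Section FacetMarkup.
Variables (T : list facet_marker) (bs : list (R3 * R3)).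
Hypothesis Hnd : Forall (fun b => nondegenerate (fst b) (snd b)) bs.
Hypothesis HT : facet_markup T bs.

Lemma facet_marker_on_face p i s : In (p, i, s) T ->
  (i < 3)%nat /\ exists b, In b bs /\ is_face (box (fst b) (snd b)) (facet (fst b) (snd b) i s) /\
                           facet (fst b) (snd b) i s p.
Proof.
  intros Ht; destruct HT as [H1 _]; rewrite Forall_forall in H1, Hnd.
  destruct (H1 _ Ht) as [Hi Hex]; apply Exists_exists in Hex as [b [Hb Hp]].
  split; [exact Hi|]; exists b; split; [exact Hb|]; split; [|exact Hp].
  apply facet_is_face; auto.
Qed.

Lemma face_has_facet_marker P F : In P (boxes bs) -> is_face P F ->
  exists b p i s, In (p, i, s) T /\ (i < 3)%nat /\ P = box (fst b) (snd b) /\ F p /\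
                  forall x, F x <-> facet (fst b) (snd b) i s x.
Proof.
  intros HP HF; destruct (face_of_boxes bs P F Hnd HP HF) as [b [i [s [Hb [Hi [-> HFi]]]]]].
  destruct HT as [_ H2]; rewrite Forall_forall in H2.
  destruct (proj1 (Exists_exists _ _) (H2 b Hb i s Hi)) as [[[p i'] s'] [Ht [-> [-> Hp]]]].
  exists b, p, i, s; repeat split; auto; try apply HFi; auto.
Qed.

Lemma pn_markup_of_facet_markup : pn_markup (map pn_of_facet_marker T) (boxes bs).
Proof.
  split.
  - intros m Hm; apply in_map_iff in Hm as [[[p i] s] [<- Ht]].
    destruct (facet_marker_on_face p i s Ht) as [Hi [b [Hb [Hface Hp]]]].
    exists (box (fst b) (snd b)), (facet (fst b) (snd b) i s).
    refine (conj (in_map _ _ _ Hb) (conj Hface (conj Hp _))).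
    apply facet_outward_unit_normal; [exact Hi | reflexivity].
  - intros P F HP HF; destruct (face_has_facet_marker P F HP HF)
      as [b [p [i [s [Ht [Hi [-> [Fp HFi]]]]]]]].
    exists (p, nvec i s); split; [apply (in_map pn_of_facet_marker _ (p, i, s) Ht)|].
    split; [exact Fp|]; apply facet_outward_unit_normal; auto.
Qed.

Lemma pp_markup_of_facet_markup : pp_markup (map pp_of_facet_marker T) (boxes bs).
Proof.
  split.
  - intros m Hm; apply in_map_iff in Hm as [[[p i] s] [<- Ht]].
    destruct (facet_marker_on_face p i s Ht) as [Hi [b [Hb [Hface Hp]]]].
    exists (box (fst b) (snd b)), (facet (fst b) (snd b) i s).
    refine (conj (in_map _ _ _ Hb) (conj Hface (conj Hp _))).
    eapply facet_axis_plane; [exact Hi | reflexivity | exact Hp].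
  - intros P F HP HF; destruct (face_has_facet_marker P F HP HF)
      as [b [p [i [s [Ht [Hi [-> [Fp HFi]]]]]]]].
    exists (p, axis_plane i (coord i p)); split; [apply (in_map pp_of_facet_marker _ (p, i, s) Ht)|].
    split; [exact Fp|]; eapply facet_axis_plane; [exact Hi | exact HFi | apply HFi; exact Fp].
Qed.
End FacetMarkup.

Lemma ForallOrdPairs_nth {A : Type} (R : A -> A -> Prop) l d i j :
  ForallOrdPairs R l -> (i < j < length l)%nat -> R (nth i l d) (nth j l d).
Proof.
  intros H; revert i j; induction H as [|a l Ha H IH]; intros i j Hij; simpl in Hij; [lia|].
  destruct i as [|i], j as [|j]; [lia| |lia|].
  - simpl; rewrite Forall_forall in Ha; apply Ha, nth_In; lia.
  - simpl; apply IH; lia.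
Qed.

Definition separated (b b' : R3 * R3) : Prop :=
  exists k, (k < 3)%nat /\
    (coord k (snd b) < coord k (fst b') \/ coord k (snd b') < coord k (fst b)).

Lemma separated_sym b b' : separated b b' -> separated b' b.
Proof. intros [k [Hk H]]; exists k; split; [exact Hk | tauto]. Qed.

Lemma separated_disjoint b b' x : separated b b' ->
  ~ (box (fst b) (snd b) x /\ box (fst b') (snd b') x).
Proof. intros [k [Hk H]] [Hx Hx']; specialize (Hx k Hk); specialize (Hx' k Hk); lra. Qed.

Lemma valid_scene_boxes bs : Forall (fun b => nondegenerate (fst b) (snd b)) bs ->
  ForallOrdPairs separated bs -> valid_scene (boxes bs).
Proof.
  intros Hnd Hsep; split.
  - intros P HP; apply in_map_iff in HP as [b [<- Hb]]; rewrite Forall_forall in Hnd.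
    apply box_convex_polyhedron, Hnd, Hb.
  - intros i j Hi Hj Hij x; unfold boxes in *.
    set (to_box := fun b : R3 * R3 => box (fst b) (snd b)) in *.
    rewrite (nth_indep _ _ (to_box (vzero, vzero)) Hi), (nth_indep _ _ (to_box (vzero, vzero)) Hj).
    rewrite length_map in Hi, Hj; rewrite !map_nth; unfold to_box.
    apply separated_disjoint.
    destruct (Nat.lt_gt_cases i j) as [[Hlt|Hgt] _]; [exact Hij| |].
    + apply ForallOrdPairs_nth; auto.
    + apply separated_sym, ForallOrdPairs_nth; auto.
Qed.

Lemma not_mem_scene_boxes P bs :
  (forall b, In b bs -> exists x, ~ (P x <-> box (fst b) (snd b) x)) -> ~ mem_scene P (boxes bs).
Proof.
  intros H [Q [HQ HPQ]]; apply in_map_iff in HQ as [b [<- Hb]].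
  destruct (H b Hb) as [x Hx]; exact (Hx (HPQ x)).
Qed.

Definition scene1 : list (R3 * R3) :=
  [((0, 0, 0), (1, 1, 3)); ((0, 2, 0), (3, 3, 1)); ((2, 0, 2), (3, 3, 3))].

Definition scene2 : list (R3 * R3) :=
  [((0, 0, 0), (1, 3, 1)); ((0, 0, 2), (3, 1, 3)); ((2, 2, 0), (3, 3, 3))].

Definition markers : list facet_marker := [
  ((0, 1/2, 1/2), 0%nat, false); ((1, 1/2, 1/2), 0%nat, true);
  ((1/2, 0, 1/2), 1%nat, false); ((1/2, 1, 5/2), 1%nat, true);
  ((1/2, 1/2, 0), 2%nat, false); ((1/2, 1/2, 3), 2%nat, true);
  ((0, 5/2, 1/2), 0%nat, false); ((3, 5/2, 1/2), 0%nat, true);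
  ((5/2, 2, 1/2), 1%nat, false); ((1/2, 3, 1/2), 1%nat, true);
  ((1/2, 5/2, 0), 2%nat, false); ((1/2, 5/2, 1), 2%nat, true);
  ((2, 5/2, 5/2), 0%nat, false); ((3, 1/2, 5/2), 0%nat, true);
  ((5/2, 0, 5/2), 1%nat, false); ((5/2, 3, 5/2), 1%nat, true);
  ((5/2, 1/2, 2), 2%nat, false); ((5/2, 1/2, 3), 2%nat, true);
  ((0, 1/2, 5/2), 0%nat, false); ((1/2, 0, 5/2), 1%nat, false);
  ((5/2, 3, 1/2), 1%nat, true); ((5/2, 5/2, 0), 2%nat, false);
  ((5/2, 5/2, 3), 2%nat, true)].

Ltac solve_box := intros k Hk; axis_cases k; cbn; lra.
Ltac solve_facet := unfold facet, box_bound; split; [unfold box; solve_box | cbn; lra].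
Ltac solve_Exists tac :=
  repeat first [apply Exists_cons_hd; solve [tac] | apply Exists_cons_tl].

Ltac solve_facet_markup :=
  split;
  [ repeat (apply Forall_cons; [cbn beta iota; split; [lia | solve_Exists solve_facet] |]);
    apply Forall_nil
  | repeat (apply Forall_cons;
      [intros i s Hi; axis_cases i; destruct s;
       solve_Exists ltac:(cbn beta iota; split; [reflexivity | split; [reflexivity | solve_facet]]) |]);
    apply Forall_nil ].

Lemma facet_markup_scene1 : facet_markup markers scene1.
Proof. solve_facet_markup. Qed.

Lemma facet_markup_scene2 : facet_markup markers scene2.
Proof. solve_facet_markup. Qed.

Ltac solve_nondegenerate :=
  repeat (apply Forall_cons; [intros k Hk; axis_cases k; cbn; lra |]); apply Forall_nil.

Lemma nondegenerate_scene1 : Forall (fun b => nondegenerate (fst b) (snd b)) scene1.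
Proof. solve_nondegenerate. Qed.

Lemma nondegenerate_scene2 : Forall (fun b => nondegenerate (fst b) (snd b)) scene2.
Proof. solve_nondegenerate. Qed.

Ltac separated_along k := exists k; split; [lia | cbn; first [left; lra | right; lra]].
Ltac solve_separated :=
  first [separated_along 0%nat | separated_along 1%nat | separated_along 2%nat].
Ltac solve_pairwise_separated :=
  repeat (apply FOP_cons; [repeat (apply Forall_cons; [solve_separated |]); apply Forall_nil |]);
  apply FOP_nil.

Lemma valid_scene1 : valid_scene (boxes scene1).
Proof.
  apply valid_scene_boxes; [exact nondegenerate_scene1 | solve_pairwise_separated].
Qed.

Lemma valid_scene2 : valid_scene (boxes scene2).
Proof.
  apply valid_scene_boxes; [exact nondegenerate_scene2 | solve_pairwise_separated].
Qed.

Lemma scenes_differ12 : scenes_differ (boxes scene1) (boxes scene2).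
Proof.
  left; exists (box (0, 0, 0) (1, 1, 3)); split; [left; reflexivity|].
  apply not_mem_scene_boxes; intros b Hb.
  destruct Hb as [<-|[<-|[<-|[]]]];
    [exists (1/2, 1/2, 2) | exists (1/2, 1/2, 1/2) | exists (1/2, 1/2, 1/2)];
    intros [H _]; specialize (H ltac:(solve_box)); cbn in H;
    pose proof (H 0%nat ltac:(lia)); pose proof (H 1%nat ltac:(lia));
    pose proof (H 2%nat ltac:(lia)); cbn in *; lra.
Qed.

Theorem mainTheorem4 :
  (exists (S S' : list region) (M : list pp_marker),
      valid_scene S /\ valid_scene S' /\ scenes_differ S S' /\
      pp_markup M S /\ pp_markup M S') /\
  (exists (S S' : list region) (M : list pn_marker),
      valid_scene S /\ valid_scene S' /\ scenes_differ S S' /\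
      pn_markup M S /\ pn_markup M S').
Proof.
  split.
  - exists (boxes scene1), (boxes scene2), (map pp_of_facet_marker markers).
    refine (conj valid_scene1 (conj valid_scene2 (conj scenes_differ12 (conj _ _)))).
    + exact (pp_markup_of_facet_markup _ _ nondegenerate_scene1 facet_markup_scene1).
    + exact (pp_markup_of_facet_markup _ _ nondegenerate_scene2 facet_markup_scene2).
  - exists (boxes scene1), (boxes scene2), (map pn_of_facet_marker markers).
    refine (conj valid_scene1 (conj valid_scene2 (conj scenes_differ12 (conj _ _)))).
    + exact (pn_markup_of_facet_markup _ _ nondegenerate_scene1 facet_markup_scene1).
    + exact (pn_markup_of_facet_markup _ _ nondegenerate_scene2 facet_markup_scene2).
Qed.
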